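(* Let $n$ be a positive integer and let $P$ be a regular Euclidean $(n+1)$-gon. Consider two intersecting diagonals of $P$, each of length at most $\lfloor n/6\rfloor$. Then the internal angle between them is $>2\pi/3$.
   Context: For a regular polygon $P$, a \emph{diagonal} is a geodesic segment connecting two (possibly consecutive) vertices of $P$. A \emph{segment} of $P$ is the smaller of the two pieces obtained by cutting $P$ along a diagonal (if the diagonal is an edge of $P$, the segment is that edge); the \emph{length} of a segment is the number of edges of $P$ it contains, and the \emph{length} of a diagonal is the length of the segment it subtends. If $P$ is an $N$-gon and $d_1,d_2$ are two diagonals of length less than $N/2$ intersecting at a point $p$ (possibly a common endpoint), exactly one connected component of $P\setminus(d_1\cup d_2)$ contains the centre of $P$; the angle at $p$ between $d_1$ and $d_2$ lying in this component is the \emph{internal angle} between $d_1$ and $d_2$. *)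

From Stdlib Require Import Reals Lra Lia Arith.
Open Scope R_scope.

Definition pt := (R * R)%type.

Definition vertex (N k : nat) : pt :=
  (cos (2 * PI * INR k / INR N), sin (2 * PI * INR k / INR N)).

Definition centre : pt := (0, 0).

(* Length of the diagonal joining vertices i and j (i, j < N): the number of
   edges of the smaller of the two pieces, i.e. the cyclic distance. *)
Definition diag_length (N i j : nat) : nat :=
  let d := ((j + N - i) mod N)%nat in Nat.min d (N - d).

Definition is_diag (N i j : nat) : Prop := (i < N)%nat /\ (j < N)%nat /\ i <> j.

Definition on_segment (a b p : pt) : Prop :=
  exists l : R, 0 <= l <= 1 /\
    fst p = (1 - l) * fst a + l * fst b /\ snd p = (1 - l) * snd a + l * snd b.

Definition in_open_cone (p a b q : pt) : Prop :=
  exists s t : R, 0 < s /\ 0 < t /\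
    fst q = fst p + s * (fst a - fst p) + t * (fst b - fst p) /\
    snd q = snd p + s * (snd a - snd p) + t * (snd b - snd p).

Definition angle (p a b : pt) : R :=
  let ux := fst a - fst p in let uy := snd a - snd p in
  let vx := fst b - fst p in let vy := snd b - snd p in
  acos ((ux * vx + uy * vy) /
        (sqrt (ux * ux + uy * uy) * sqrt (vx * vx + vy * vy))).

(* theta is the internal angle between the diagonals d1 = [v_i1, v_j1] and
   d2 = [v_i2, v_j2] of the regular N-gon: they meet at p, and theta is the
   angle at p between the piece of d1 from p to one of its endpoints a and the
   piece of d2 from p to one of its endpoints b, the sector between them
   being the one in the component of P \ (d1 u d2) containing the centre
   (equivalently: the centre lies in the open cone spanned at p by a and b). *)
Definition internal_angle (N i1 j1 i2 j2 : nat) (theta : R) : Prop :=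
  exists p a b : pt,
    on_segment (vertex N i1) (vertex N j1) p /\
    on_segment (vertex N i2) (vertex N j2) p /\
    (a = vertex N i1 \/ a = vertex N j1) /\
    (b = vertex N i2 \/ b = vertex N j2) /\
    a <> p /\ b <> p /\
    in_open_cone p a b centre /\
    theta = angle p a b.

(* A diagonal of length at most n/6 in
   the (n+1)-gon joins two unit vectors e, f with e.f = cos(2 pi k/(n+1)) > 1/2.
   Seen from a point p of such a chord, the direction to an endpoint and the
   direction to the centre make an angle > pi/3 (the base angle of the isosceles
   triangle e, f, 0, whose apex angle is < pi/3, is already > pi/3, and p only
   widens it). The internal angle at the crossing point p contains the direction
   to the centre, so it is the sum of two such angles, hence > 2 pi/3. *)
From Stdlib Require Import Reals Lra Lia Arith.
Open Scope R_scope.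

Definition dot (u v : pt) : R := fst u * fst v + snd u * snd v.

Definition vnorm (u : pt) : R := sqrt (dot u u).

Definition vsub (a p : pt) : pt := (fst a - fst p, snd a - snd p).

Lemma dot_vsub_self_gt0 (a p : pt) : a <> p -> 0 < dot (vsub a p) (vsub a p).
Proof.
  destruct a as [ax ay], p as [px py]; unfold dot, vsub; simpl; intros Hap.
  pose proof (Rle_0_sqr (ax - px)) as Hx. pose proof (Rle_0_sqr (ay - py)) as Hy.
  unfold Rsqr in Hx, Hy.
  destruct (Req_dec ax px) as [-> | Hne].
  - destruct (Req_dec ay py) as [-> | Hne]; [congruence|].
    assert (0 < (ay - py) * (ay - py)) by (apply Rsqr_pos_lt; lra). lra.
  - assert (0 < (ax - px) * (ax - px)) by (apply Rsqr_pos_lt; lra). lra.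
Qed.

Lemma vnorm_gt0 (u : pt) : 0 < dot u u -> 0 < vnorm u.
Proof. intros; apply sqrt_lt_R0; assumption. Qed.

Lemma vnorm_sqr (u : pt) : 0 <= dot u u -> vnorm u * vnorm u = dot u u.
Proof. intros; apply sqrt_sqrt; assumption. Qed.

Lemma lt_sqrt_mul_of_sqr (x a b : R) :
  0 <= a -> 0 <= b -> 4 * x * x < a * b -> 2 * x < sqrt a * sqrt b.
Proof.
  intros Ha Hb Hx. rewrite <- sqrt_mult by assumption.
  destruct (Rle_lt_dec x 0) as [Hneg | Hpos].
  - assert (0 < sqrt (a * b)) by (apply sqrt_lt_R0; nra). lra.
  - rewrite <- (sqrt_square (2 * x)) by lra. apply sqrt_lt_1; nra.
Qed.

Lemma acos_gt_2PI3 (x : R) : x < -1/2 -> acos x > 2 * PI / 3.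
Proof.
  intros Hx. assert (HPI := PI_RGT_0).
  destruct (Rle_dec x (-1)) as [Hle | Hgt].
  - unfold acos. destruct (Rle_dec x (-1)); [lra | contradiction].
  - destruct (acos_bound x) as [A0 API].
    replace (2 * PI / 3) with (2 * (PI / 3)) by field.
    apply Rlt_gt, cos_decreasing_0; try lra.
    rewrite cos_acos, cos_2PI3 by lra. lra.
Qed.

Lemma angle_gt_2PI3 (p a b : pt) : a <> p -> b <> p ->
  2 * dot (vsub a p) (vsub b p) < - (vnorm (vsub a p) * vnorm (vsub b p)) ->
  angle p a b > 2 * PI / 3.
Proof.
  intros Hap Hbp Hobtuse.
  pose proof (vnorm_gt0 _ (dot_vsub_self_gt0 _ _ Hap)) as Hu.
  pose proof (vnorm_gt0 _ (dot_vsub_self_gt0 _ _ Hbp)) as Hv.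
  change (acos (dot (vsub a p) (vsub b p) / (vnorm (vsub a p) * vnorm (vsub b p)))
          > 2 * PI / 3).
  apply acos_gt_2PI3, Rmult_lt_reg_r with (vnorm (vsub a p) * vnorm (vsub b p)).
  - nra.
  - unfold Rdiv. rewrite Rmult_assoc, Rinv_l by nra. lra.
Qed.

Lemma cone_angle_sum (u v w : pt) (s t : R) : 0 < s -> 0 < t ->
  fst w = s * fst u + t * fst v -> snd w = s * snd u + t * snd v ->
  0 < dot u u -> 0 < dot v v -> 0 < dot w w ->
  2 * dot u w < vnorm u * vnorm w -> 2 * dot v w < vnorm v * vnorm w ->
  2 * dot u v < - (vnorm u * vnorm v).
Proof.
  intros Hs Ht Hwx Hwy Hu Hv Hw Huw Hvw.
  pose proof (vnorm_sqr u ltac:(lra)) as Eu. pose proof (vnorm_sqr v ltac:(lra)) as Ev.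
  pose proof (vnorm_sqr w ltac:(lra)) as Ew.
  pose proof (vnorm_gt0 u Hu) as Pu. pose proof (vnorm_gt0 v Hv) as Pv. pose proof (vnorm_gt0 w Hw) as Pw.
  set (nu := vnorm u) in *; set (nv := vnorm v) in *; set (nw := vnorm w) in *.
  set (c := dot u v).
  assert (Duw : dot u w = s * (nu * nu) + t * c)
    by (rewrite Eu; unfold c, dot; rewrite Hwx, Hwy; ring).
  assert (Dvw : dot v w = s * c + t * (nv * nv))
    by (rewrite Ev; unfold c, dot; rewrite Hwx, Hwy; ring).
  assert (Dww : nw * nw = s * dot u w + t * dot v w)
    by (rewrite Ew; unfold dot; rewrite Hwx, Hwy; ring).
  set (X := s * nu + t * nv).
  assert (HX : 0 < X) by (unfold X; nra).
  assert (Hw_lt : 2 * nw < X).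
  { assert (2 * (nw * nw) < X * nw) by (rewrite Dww; unfold X; nra). nra. }
  assert (Hsum : 2 * (nu * nv + c) * X < 2 * nu * nv * nw).
  { replace (2 * (nu * nv + c) * X) with (nv * (2 * dot u w) + nu * (2 * dot v w))
      by (rewrite Duw, Dvw; unfold X; ring).
    nra. }
  assert (0 < nu * nv * (X - 2 * nw)) by (apply Rmult_lt_0_compat; nra).
  assert ((nu * nv + 2 * c) * X < 0) by lra.
  assert (nu * nv + 2 * c < 0) by nra.
  unfold c in *; lra.
Qed.

Lemma on_segment_sym (e f p : pt) : on_segment e f p -> on_segment f e p.
Proof.
  intros [l [Hl [Hx Hy]]]. exists (1 - l).
  split; [lra|]. split; [rewrite Hx | rewrite Hy]; ring.
Qed.

(* With D := 1 - e.f and p = (1-l) e + l f one has |e-p|^2 = 2 l^2 D,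
   (e-p).(0-p) = l (2l-1) D and |p|^2 = 1 - 2 l (1-l) D. *)
Lemma short_chord_endpoint_angle (e f p : pt) :
  dot e e = 1 -> dot f f = 1 -> dot e f > 1/2 -> on_segment e f p -> e <> p ->
  2 * dot (vsub e p) (vsub centre p) < vnorm (vsub e p) * vnorm (vsub centre p)
  /\ 0 < dot (vsub centre p) (vsub centre p).
Proof.
  intros He Hf Hef [l [Hl [Hpx Hpy]]] Hep.
  pose proof (dot_vsub_self_gt0 _ _ Hep) as Hu.
  set (D := 1 - dot e f).
  assert (Eu : dot (vsub e p) (vsub e p) = 2 * l * l * D).
  { transitivity (2 * l * l * D + l * l * ((dot e e - 1) + (dot f f - 1))).
    - unfold D, dot, vsub; rewrite Hpx, Hpy; simpl; ring.
    - rewrite He, Hf; ring. }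
  assert (Ew : dot (vsub e p) (vsub centre p) = l * (2 * l - 1) * D).
  { transitivity (l * (2 * l - 1) * D - l * (1 - l) * (dot e e - 1)
                  + l * l * (dot f f - 1)).
    - unfold D, dot, vsub, centre; rewrite Hpx, Hpy; simpl; ring.
    - rewrite He, Hf; ring. }
  assert (Ep : dot (vsub centre p) (vsub centre p) = 1 - 2 * l * (1 - l) * D).
  { transitivity (1 - 2 * l * (1 - l) * D + (1 - l) * (1 - l) * (dot e e - 1)
                  + l * l * (dot f f - 1)).
    - unfold D, dot, vsub, centre; rewrite Hpx, Hpy; simpl; ring.
    - rewrite He, Hf; ring. }
  rewrite Eu in Hu.
  assert (HD : D < 1/2) by (unfold D; lra).
  assert (HD0 : 0 < D).
  { destruct (Rle_lt_dec D 0) as [Hle | Hlt]; [|exact Hlt].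
    assert (0 <= 2 * l * l * - D) by (apply Rmult_le_pos; nra). lra. }
  assert (Hl1 : 0 <= l * (1 - l) <= 1/4)
    by (pose proof (Rle_0_sqr (l - 1/2)); unfold Rsqr in *; nra).
  assert (Hp : 0 < 1 - 2 * l * (1 - l) * D) by nra.
  split; [|rewrite Ep; exact Hp].
  unfold vnorm. rewrite Eu, Ew, Ep.
  apply lt_sqrt_mul_of_sqr; [lra | lra |].
  assert (D * (3 * l * l - 3 * l + 1) < 1/2) by nra.
  nra.
Qed.

Lemma dot_comm (u v : pt) : dot u v = dot v u.
Proof. unfold dot; ring. Qed.

Lemma short_chord_angle (e f p c : pt) :
  dot e e = 1 -> dot f f = 1 -> dot e f > 1/2 -> on_segment e f p ->
  (c = e \/ c = f) -> c <> p ->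
  2 * dot (vsub c p) (vsub centre p) < vnorm (vsub c p) * vnorm (vsub centre p)
  /\ 0 < dot (vsub centre p) (vsub centre p).
Proof.
  intros He Hf Hef Hseg [-> | ->] Hcp.
  - apply (short_chord_endpoint_angle e f); assumption.
  - apply (short_chord_endpoint_angle f e); try assumption.
    + rewrite dot_comm; assumption.
    + apply on_segment_sym; assumption.
Qed.

Lemma cos_2PI_minus (x : R) : cos (2 * PI - x) = cos x.
Proof.
  rewrite <- (cos_neg x), <- (cos_period (- x) 1). f_equal. simpl; ring.
Qed.

Lemma cos_2PI_frac_gt_half (N k : nat) :
  (6 * k < N)%nat -> cos (2 * PI * INR k / INR N) > 1/2.
Proof.
  intros Hk. assert (HPI := PI_RGT_0).
  assert (HN : 0 < INR N) by (apply lt_0_INR; lia).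
  assert (H6k : 6 * INR k < INR N).
  { replace 6 with (INR 6) by (simpl; ring). rewrite <- mult_INR. apply lt_INR, Hk. }
  assert (Hk0 := pos_INR k).
  assert (Hx0 : 0 <= 2 * PI * INR k / INR N).
  { apply Rmult_le_pos; [nra | left; apply Rinv_0_lt_compat, HN]. }
  assert (Hx : 2 * PI * INR k / INR N < PI / 3).
  { apply Rmult_lt_reg_r with (INR N); [exact HN|].
    unfold Rdiv. rewrite Rmult_assoc, Rinv_l by lra. nra. }
  rewrite <- cos_PI3. apply Rlt_gt, cos_decreasing_1; lra.
Qed.

Lemma dot_vertex (N i j : nat) : is_diag N i j ->
  dot (vertex N i) (vertex N j) = cos (2 * PI * INR (diag_length N i j) / INR N).
Proof.
  intros [Hi [Hj _]].
  assert (HN : 0 < INR N) by (apply lt_0_INR; lia).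
  unfold dot, vertex; simpl. rewrite <- cos_minus, <- cos_neg.
  unfold diag_length.
  set (m := ((j + N - i) mod N)%nat).
  set (q := ((j + N - i) / N)%nat).
  assert (Hdiv : (j + N - i = N * q + m)%nat) by apply Nat.div_mod_eq.
  assert (Hm : (m < N)%nat) by (apply Nat.mod_upper_bound; lia).
  assert (Hdiv_R : INR j + INR N - INR i = INR N * INR q + INR m).
  { rewrite <- plus_INR, <- minus_INR, <- mult_INR, <- plus_INR by lia.
    f_equal; exact Hdiv. }
  assert (Hcos_m : cos (- (2 * PI * INR i / INR N - 2 * PI * INR j / INR N))
                   = cos (2 * PI * INR m / INR N)).
  { rewrite <- (cos_period _ 1), <- (cos_period (2 * PI * INR m / INR N) q).
    f_equal. apply Rmult_eq_reg_r with (INR N); [|lra].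
    unfold Rdiv; simpl; field_simplify; [|lra..]. nra. }
  rewrite Hcos_m.
  destruct (Nat.le_ge_cases m (N - m)) as [Hmin | Hmin].
  - rewrite Nat.min_l by exact Hmin. reflexivity.
  - rewrite Nat.min_r by exact Hmin.
    rewrite <- cos_2PI_minus, minus_INR by lia. f_equal. field. lra.
Qed.

Lemma dot_vertex_self (N k : nat) : dot (vertex N k) (vertex N k) = 1.
Proof. unfold dot, vertex; simpl. rewrite Rplus_comm. apply sin2_cos2. Qed.

Lemma short_diag_dot_gt_half (n i j : nat) : is_diag (S n) i j ->
  (diag_length (S n) i j <= n / 6)%nat -> dot (vertex (S n) i) (vertex (S n) j) > 1/2.
Proof.
  intros Hij Hl. rewrite dot_vertex by exact Hij.
  apply cos_2PI_frac_gt_half. pose proof (Nat.Div0.mul_div_le n 6). lia.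
Qed.

Theorem lemma3p3 (n : nat) (i1 j1 i2 j2 : nat) (theta : R) :
  (0 < n)%nat ->
  is_diag (S n) i1 j1 -> is_diag (S n) i2 j2 ->
  (diag_length (S n) i1 j1 <= n / 6)%nat ->
  (diag_length (S n) i2 j2 <= n / 6)%nat ->
  internal_angle (S n) i1 j1 i2 j2 theta ->
  theta > 2 * PI / 3.
Proof.
  intros _ Hd1 Hd2 Hl1 Hl2
    [p [a [b [Hp1 [Hp2 [Ha [Hb [Hap [Hbp [[s [t [Hs [Ht [Hx Hy]]]]] ->]]]]]]]]]].
  destruct (short_chord_angle _ _ p a (dot_vertex_self _ _) (dot_vertex_self _ _)
              (short_diag_dot_gt_half _ _ _ Hd1 Hl1) Hp1 Ha Hap) as [Hwide_a Hc].
  destruct (short_chord_angle _ _ p b (dot_vertex_self _ _) (dot_vertex_self _ _)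
              (short_diag_dot_gt_half _ _ _ Hd2 Hl2) Hp2 Hb Hbp) as [Hwide_b _].
  apply angle_gt_2PI3; [exact Hap | exact Hbp |].
  apply (cone_angle_sum _ _ (vsub centre p) s t); auto using dot_vsub_self_gt0;
    unfold vsub, centre in *; simpl in *; lra.
Qed.
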